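(* Let $G$ be a graph of order $n$, and let $H$ be a graph with $\Delta(H)\le n(H)-2$, where $n(H)=|V(H)|$. Then $$\gamma_{oidR}(G\odot H)=\min\{|V_0|(n(H)+\gamma(H))+|V_1|(\gamma_{oidR}(H)+1)+|V_2|(\gamma_{oiR}(H)+2)+|V_3|(\beta(H)+3)\},$$ where the minimum is taken over all functions $f_G:V(G)\to\{0,1,2,3\}$ for which $V_0=f_G^{-1}(0)$ is an independent set of $G$, and $V_i=f_G^{-1}(i)$.
   Context: The corona $G\odot H$ is obtained from $G$ with $V(G)=\{v_1,\dots,v_n\}$ and $n$ disjoint copies $H_1,\dots,H_n$ of $H$ by joining $v_i$ to every vertex of $H_i$ for each $i$. $\gamma(H)$ is the domination number and $\beta(H)$ the vertex cover number of $H$. A DRD function of a graph is $f:V\to\{0,1,2,3\}$ such that every vertex with value $0$ has a neighbor with value $3$ or two neighbors with value $2$, and every vertex with value $1$ has a neighbor with value at least $2$; it is an OIDRD function if the set of vertices with value $0$ is independent, and $\gamma_{oidR}$ is the minimum weight $\sum_v f(v)$ of an OIDRD function. A Roman dominating function is $f:V\to\{0,1,2\}$ such that every vertex with value $0$ has a neighbor with value $2$; it is an OIRD function if the set of vertices with value $0$ is independent, and $\gamma_{oiR}$ is the minimum weight of an OIRD function. *)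

From mathcomp Require Import all_boot.
Set Implicit Arguments. Unset Strict Implicit. Unset Printing Implicit Defensive.

Section Graphs.
Variables (T : finType) (e : rel T).

Definition simple_graph : Prop := symmetric e /\ irreflexive e.

Definition nbhd (v : T) : {set T} := [set u | e v u].
Definition max_degree : nat := \max_(v : T) #|nbhd v|.

Definition independent (S : {set T}) : bool :=
  [forall u, forall v, ((u \in S) && (v \in S)) ==> ~~ e u v].

Definition dominating (S : {set T}) : bool :=
  [forall v, (v \in S) || [exists u, e v u && (u \in S)]].

Definition vertex_cover (S : {set T}) : bool :=
  [forall u, forall v, e u v ==> ((u \in S) || (v \in S))].

(* domination number and vertex cover number (setT is always feasible) *)
Definition gamma : nat := \big[minn/#|T|]_(S : {set T} | dominating S) #|S|.
Definition beta : nat := \big[minn/#|T|]_(S : {set T} | vertex_cover S) #|S|.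

Definition isDRD (f : {ffun T -> 'I_4}) : bool :=
  [forall v,
    ((f v == 0 :> nat) ==>
       ([exists u, e v u && (f u == 3 :> nat)]
        || (2 <= #|[set u | e v u && (f u == 2 :> nat)]|)))
    && ((f v == 1 :> nat) ==> [exists u, e v u && (2 <= f u)])].

Definition isOIDRD (f : {ffun T -> 'I_4}) : bool :=
  isDRD f && independent [set v | f v == 0 :> nat].

Definition weight4 (f : {ffun T -> 'I_4}) : nat := \sum_(v : T) (f v : nat).

(* the constant-3 function is always an OIDRD function, of weight 3|T| *)
Definition gamma_oidR : nat :=
  \big[minn/3 * #|T|]_(f : {ffun T -> 'I_4} | isOIDRD f) weight4 f.

Definition isRD (f : {ffun T -> 'I_3}) : bool :=
  [forall v, (f v == 0 :> nat) ==> [exists u, e v u && (f u == 2 :> nat)]].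

Definition isOIRD (f : {ffun T -> 'I_3}) : bool :=
  isRD f && independent [set v | f v == 0 :> nat].

Definition weight3 (f : {ffun T -> 'I_3}) : nat := \sum_(v : T) (f v : nat).

(* the constant-2 function is always an OIRD function, of weight 2|T| *)
Definition gamma_oiR : nat :=
  \big[minn/2 * #|T|]_(f : {ffun T -> 'I_3} | isOIRD f) weight3 f.

End Graphs.

(* Corona G ⊙ H: vertices inl v (v in G) and inr (v, h) (h in the copy H_v). *)
Definition corona_vert (TG TH : finType) : finType := (TG + (TG * TH))%type.

Definition corona (TG TH : finType) (eG : rel TG) (eH : rel TH) :
  rel (corona_vert TG TH) :=
  fun x y =>
    match x, y with
    | inl u, inl v => eG u v
    | inl u, inr (i, _) => u == i
    | inr (i, _), inl u => u == i
    | inr (i, h), inr (j, k) => (i == j) && eH h k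
    end.

Definition corona_cost (TG TH : finType) (eH : rel TH) (fG : {ffun TG -> 'I_4}) : nat :=
  #|[set v | fG v == 0 :> nat]| * (#|TH| + gamma eH)
  + #|[set v | fG v == 1 :> nat]| * (gamma_oidR eH + 1)
  + #|[set v | fG v == 2 :> nat]| * (gamma_oiR eH + 2)
  + #|[set v | fG v == 3 :> nat]| * (beta eH + 3).

(* An OIDRD function f of G ⊙ H splits into its labels on G and its
   restrictions to the copies H_v.  A vertex of H_v sees only its neighbours in
   H_v and the hub v, so if the hub carries label k the restriction to H_v is:
   for k = 0, a labelling without 0s whose 2s and 3s dominate its 1s, of weight
   at least n(H) + γ(H); for k = 1, an OIDRD function of H; for k = 2, after
   lowering its 3s to 2s, an OIRD function of H; for k = 3, a labelling whose
   0s are independent, so that its support is a vertex cover.  Conversely,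
   minimum such labellings of the copies glue to an OIDRD function of G ⊙ H
   whenever the 0s of f_G are independent: Δ(H) ≤ n(H) - 2 forces γ(H) ≥ 2,
   so a hub labelled 0 sees two 2s, and every DRD function of H has a label
   ≥ 2, which serves a hub labelled 1. *)

From mathcomp Require Import all_boot zify.
Set Implicit Arguments. Unset Strict Implicit. Unset Printing Implicit Defensive.

Section BigMin.
Variables (I : finType) (P : pred I) (F : I -> nat) (d : nat).

Lemma bigmin_le x : P x -> \big[minn/d]_(i | P i) F i <= F x.
Proof.
move=> Px; rewrite unlock /reducebig.
have : x \in index_enum I by rewrite mem_index_enum.
elim: (index_enum I) => //= a r IH; rewrite inE => /orP [/eqP <-|xr].
  by rewrite Px geq_minl.
case: (P a); last exact: IH.
by rewrite (leq_trans (geq_minr _ _)) // IH.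
Qed.

Lemma bigmin_attained x0 :
  P x0 -> F x0 <= d -> exists2 x, P x & \big[minn/d]_(i | P i) F i = F x.
Proof.
move=> Px0 Fx0d.
have [|//] : \big[minn/d]_(i | P i) F i = d \/
               exists2 x, P x & \big[minn/d]_(i | P i) F i = F x.
  apply: (big_ind (fun m => m = d \/ exists2 x, P x & m = F x)); first by left.
    by move=> a b Ha Hb; rewrite /minn; case: ltnP.
  by move=> i Pi; right; exists i.
move=> min_d; exists x0 => //.
by apply/eqP; rewrite eqn_leq bigmin_le //= min_d.
Qed.

End BigMin.

Section Graph.
Variables (T : finType) (e : rel T).

Definition nbrs_with n (f : T -> 'I_n) (P : pred nat) (x : T) : {set T} :=
  [set y | e x y && P (f y)].

Lemma nbrs_withS n (f : T -> 'I_n) (P Q : pred nat) x :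
  subpred P Q -> #|nbrs_with f P x| <= #|nbrs_with f Q x|.
Proof.
move=> PQ; apply/subset_leq_card/subsetP => y; rewrite !inE.
by case/andP => -> /PQ.
Qed.

Lemma exists_nbrs_with n (f : T -> 'I_n) (P : pred nat) x :
  [exists y, e x y && P (f y)] = (0 < #|nbrs_with f P x|).
Proof.
by apply/existsP/card_gt0P => -[y]; rewrite ?inE => exy; exists y; rewrite ?inE.
Qed.

Lemma independentP (S : {set T}) :
  reflect (forall u v, u \in S -> v \in S -> ~~ e u v) (independent e S).
Proof.
apply: (iffP forallP) => [H u v uS vS|H u].
  by move: (H u) => /forallP /(_ v) /implyP; apply; rewrite uS vS.
by apply/forallP => v; apply/implyP => /andP [] /H; apply.
Qed.

Lemma dominatingP (S : {set T}) :
  reflect (forall v, v \in S \/ exists2 u, e v u & u \in S) (dominating e S).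
Proof.
apply: (iffP forallP) => [H v|H v].
  by case/orP: (H v) => [->|/existsP [u /andP [] ? ?]]; [left|right; exists u].
by case: (H v) => [->//|[u ? ?]]; apply/orP; right; apply/existsP; exists u; apply/andP.
Qed.

Lemma vertex_coverP (S : {set T}) :
  reflect (forall u v, e u v -> u \in S \/ v \in S) (vertex_cover e S).
Proof.
apply: (iffP forallP) => [H u v euv|H u].
  by move: (H u) => /forallP /(_ v) /implyP /(_ euv) /orP.
by apply/forallP => v; apply/implyP => /H [] ->; rewrite ?orbT.
Qed.

(* The double Roman condition at [x], when [x] has one further neighbour,
   outside the graph, labelled [a]; [a = 0] gives the plain condition. *)
Definition DRD_at (f : {ffun T -> 'I_4}) (a : nat) (x : T) : Prop :=
  (f x = 0 :> nat ->
     0 < (a == 3) + #|nbrs_with f (pred1 3) x| \/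
     1 < (a == 2) + #|nbrs_with f (pred1 2) x|) /\
  (f x = 1 :> nat -> 0 < (1 < a) + #|nbrs_with f (leq 2) x|).

Lemma isDRDP (f : {ffun T -> 'I_4}) : reflect (forall x, DRD_at f 0 x) (isDRD e f).
Proof.
rewrite /isDRD; under eq_forallb => x.
  rewrite (exists_nbrs_with f (pred1 3)) (exists_nbrs_with f (leq 2)).
  over.
apply: (iffP forallP) => H x; have {H} := H x.
  by case/andP => /implyP H0 /implyP H1; split=> /eqP; [move/H0/orP|move/H1].
by case=> H0 H1; apply/andP; split; apply/implyP=> /eqP; [move/H0/orP|move/H1].
Qed.

Lemma isRDP (f : {ffun T -> 'I_3}) :
  reflect (forall v, f v = 0 :> nat -> 0 < #|nbrs_with f (pred1 2) v|) (isRD e f).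
Proof.
apply: (iffP forallP) => H v.
  by move=> /eqP; move: (H v) => /implyP; rewrite (exists_nbrs_with f (pred1 2)).
by apply/implyP => /eqP /H; rewrite (exists_nbrs_with f (pred1 2)).
Qed.

Lemma sum_nat_mem (A : {set T}) : \sum_(v : T) (v \in A : nat) = #|A|.
Proof.
by rewrite -sum1_card [RHS]big_mkcond; apply: eq_bigr => v _; case: (v \in A).
Qed.

Lemma beta_le_weight4 (f : {ffun T -> 'I_4}) :
  independent e [set v | f v == 0 :> nat] -> beta e <= weight4 f.
Proof.
move/independentP => indep0.
have cover : vertex_cover e [set v | f v != 0 :> nat].
  apply/vertex_coverP => u v euv; rewrite !inE.
  case: (boolP (f u == 0 :> nat)) => u0; last by left.
  right; apply/negP => v0.
  by move: (indep0 u v); rewrite !inE u0 v0 euv => /(_ isT isT).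
apply: leq_trans (bigmin_le _ _ cover) _.
by rewrite -sum_nat_mem; apply: leq_sum => v _; rewrite inE; case: (nat_of_ord (f v)).
Qed.

Lemma card_add_gamma_le_weight4 (f : {ffun T -> 'I_4}) :
  (forall v, f v != 0 :> nat) ->
  (forall v, f v = 1 :> nat -> 0 < #|nbrs_with f (leq 2) v|) ->
  #|T| + gamma e <= weight4 f.
Proof.
move=> f_neq0 ones_dominated.
have dom : dominating e [set v | 2 <= f v].
  apply/dominatingP => v; rewrite inE; case: (leqP 2 (f v)) => [|f_lt2]; first by left.
  have /ones_dominated/card_gt0P [u] : f v = 1 :> nat.
    by move: (f_neq0 v) f_lt2; case: (nat_of_ord (f v)) => [|[|]].
  by rewrite !inE => /andP [evu f2]; right; exists u; rewrite ?inE.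
apply: leq_trans (_ : #|T| + #|[set v | 2 <= f v]| <= _).
  by rewrite leq_add2l; apply: bigmin_le.
rewrite -sum_nat_mem -sum1_card -big_split /=.
by apply: leq_sum => v _; rewrite inE; move: (f_neq0 v); case: (nat_of_ord (f v)) => [|[|]].
Qed.

Definition trunc2 (f : {ffun T -> 'I_4}) : {ffun T -> 'I_3} :=
  [ffun v => inord (minn (f v) 2)].

Lemma trunc2E f v : trunc2 f v = minn (f v) 2 :> nat.
Proof. by rewrite ffunE inordK // ltnS geq_minr. Qed.

Lemma gamma_oiR_le_weight4 (f : {ffun T -> 'I_4}) :
  independent e [set v | f v == 0 :> nat] ->
  (forall v, f v = 0 :> nat -> 0 < #|nbrs_with f (leq 2) v|) ->
  gamma_oiR e <= weight4 f.
Proof.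
move=> indep0 zeros_dominated.
have trunc2_eq0 v : (trunc2 f v == 0 :> nat) = (f v == 0 :> nat).
  by rewrite trunc2E; case: (nat_of_ord (f v)) => [|[|]].
have nbrs_trunc2 v : nbrs_with (trunc2 f) (pred1 2) v = nbrs_with f (leq 2) v.
  by apply/setP => u; rewrite !inE /= trunc2E; case: (nat_of_ord (f u)) => [|[|]].
have OIRD : isOIRD e (trunc2 f).
  apply/andP; split.
    by apply/isRDP => v /eqP; rewrite nbrs_trunc2 trunc2_eq0 => /eqP /zeros_dominated.
  apply/independentP => u v; rewrite !inE !trunc2_eq0 => u0 v0.
  by move/independentP: indep0; apply; rewrite inE.
apply: leq_trans (bigmin_le _ _ OIRD) _.
by apply: leq_sum => v _; rewrite trunc2E geq_minl.
Qed.

Lemma gamma_attained : exists2 S, dominating e S & gamma e = #|S|.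
Proof.
apply: (bigmin_attained (x0 := setT)); last by rewrite cardsT.
by apply/dominatingP => v; left; rewrite inE.
Qed.

Lemma beta_attained : exists2 S, vertex_cover e S & beta e = #|S|.
Proof.
apply: (bigmin_attained (x0 := setT)); last by rewrite cardsT.
by apply/vertex_coverP => u v _; left; rewrite inE.
Qed.

Lemma gamma_oidR_attained : exists2 f, isOIDRD e f & gamma_oidR e = weight4 f.
Proof.
pose f3 : {ffun T -> 'I_4} := [ffun=> inord 3].
have f3E v : f3 v = 3 :> nat by rewrite ffunE inordK.
apply: (bigmin_attained (x0 := f3)).
  apply/andP; split; first by apply/isDRDP => v; rewrite /DRD_at f3E.
  by apply/independentP => u v; rewrite inE f3E.
rewrite /weight4 (eq_bigr (fun=> 3)) => [|v _]; last exact: f3E.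
by rewrite sum_nat_const mulnC.
Qed.

Lemma gamma_oiR_attained : exists2 f, isOIRD e f & gamma_oiR e = weight3 f.
Proof.
pose f2 : {ffun T -> 'I_3} := [ffun=> inord 2].
have f2E v : f2 v = 2 :> nat by rewrite ffunE inordK.
apply: (bigmin_attained (x0 := f2)).
  apply/andP; split; first by apply/isRDP => v; rewrite f2E.
  by apply/independentP => u v; rewrite inE f2E.
rewrite /weight3 (eq_bigr (fun=> 2)) => [|v _]; last exact: f2E.
by rewrite sum_nat_const mulnC.
Qed.

Lemma two_le_card_dominating (S : {set T}) :
  symmetric e -> max_degree e + 2 <= #|T| -> dominating e S -> 1 < #|S|.
Proof.
move=> e_sym deg_small /dominatingP S_dom; rewrite ltnNge; apply/negP => S_le1.
have /card_gt0P [x _] : 0 < #|T| by lia.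
have [u Su] : exists u, u \in S by case: (S_dom x) => [|[u _]]; [exists x|exists u].
have S_u w : w \in S -> w = u.
  move=> Sw; apply/eqP; apply: contraTT S_le1 => wu; rewrite -ltnNge.
  have : #|[set u; w]| <= #|S|.
    by apply/subset_leq_card/subsetP => y; rewrite !inE => /orP [] /eqP ->.
  by rewrite cards2 eq_sym wu.
have : #|[set~ u]| <= #|nbhd e u|.
  apply/subset_leq_card/subsetP => v; rewrite !inE => vu.
  case: (S_dom v) => [/S_u vu'|[w evw /S_u wu]]; first by rewrite vu' eqxx in vu.
  by rewrite e_sym -wu.
have := @leq_bigmax _ (fun v => #|nbhd e v|) u.
move: deg_small; rewrite cardsC1 /max_degree; lia.
Qed.

Lemma isDRD_big_label (f : {ffun T -> 'I_4}) (x : T) :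
  isDRD e f -> exists v, 1 < f v.
Proof.
move/isDRDP/(_ x) => [/= f0 f1].
case: (ltnP 1 (f x)) => [|f_le1]; first by exists x.
have : 0 < #|nbrs_with f (leq 2) x|.
  move: f_le1 f0 f1; case: (nat_of_ord (f x)) => [|[|//]] _ f0 f1; last exact: f1.
  case: (f0 erefl) => [|/ltnW] /leq_trans; apply; apply: nbrs_withS => n /eqP -> //.
by case/card_gt0P => y; rewrite inE => /andP [_ ?]; exists y.
Qed.

Definition dom_label (D : {set T}) : {ffun T -> 'I_4} :=
  [ffun v => inord (1 + (v \in D))].
Definition widen_label (r : {ffun T -> 'I_3}) : {ffun T -> 'I_4} :=
  [ffun v => widen_ord (isT : 3 <= 4) (r v)].
Definition cover_label (S : {set T}) : {ffun T -> 'I_4} := [ffun v => inord (v \in S)].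

Lemma dom_labelE D v : dom_label D v = 1 + (v \in D) :> nat.
Proof. by rewrite ffunE inordK //; case: (v \in D). Qed.

Lemma widen_labelE r v : widen_label r v = r v :> nat.
Proof. by rewrite ffunE. Qed.

Lemma cover_labelE S v : cover_label S v = (v \in S) :> nat.
Proof. by rewrite ffunE inordK //; case: (v \in S). Qed.

Lemma weight4_dom_label D : weight4 (dom_label D) = #|T| + #|D|.
Proof.
rewrite -sum_nat_mem -sum1_card -big_split; apply: eq_bigr => v _.
by rewrite dom_labelE.
Qed.

Lemma weight4_widen_label r : weight4 (widen_label r) = weight3 r.
Proof. by apply: eq_bigr => v _; rewrite widen_labelE. Qed.

Lemma weight4_cover_label S : weight4 (cover_label S) = #|S|.
Proof.
by rewrite -sum_nat_mem; apply: eq_bigr => v _; rewrite cover_labelE.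
Qed.

End Graph.

Section Corona.
Variables (TG TH : finType) (eG : rel TG) (eH : rel TH).
Local Notation V := (corona_vert TG TH).
Local Notation C := (corona eG eH).

Lemma inr_copy_inj v : injective (fun h => inr (v, h) : V).
Proof. by move=> h k []. Qed.

Definition hub (f : {ffun V -> 'I_4}) : {ffun TG -> 'I_4} := [ffun v => f (inl v)].
Definition copy (f : {ffun V -> 'I_4}) (v : TG) : {ffun TH -> 'I_4} :=
  [ffun h => f (inr (v, h))].

Lemma weight4_corona f : weight4 f = \sum_(v : TG) (hub f v + weight4 (copy f v)).
Proof.
rewrite /weight4 big_sumType big_split pair_big /=.
by congr (_ + _); apply: eq_bigr; [move=> v|move=> [v h]] => _; rewrite ffunE.
Qed.

Lemma card_copy_nbrs (f : {ffun V -> 'I_4}) v h (P : pred nat) :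
  #|nbrs_with C f P (inr (v, h))| = P (f (inl v)) + #|nbrs_with eH (copy f v) P h|.
Proof.
rewrite (cardsD1 (inl v)) inE /= eqxx -(card_imset _ (inr_copy_inj (v := v))).
congr (_ + _).
apply: eq_card => x; rewrite !inE; apply/andP/imsetP => [[xv]|[k]].
  case: x xv => [u|[w k]] /=.
    by move=> uv /andP [/eqP uv' _]; rewrite uv' eqxx in uv.
  by move=> _ /andP [/andP [/eqP <- ehk] Pk]; exists k; rewrite // !inE ffunE ehk.
by rewrite !inE ffunE => /andP [ehk Pk] ->; rewrite /= eqxx ehk.
Qed.

Lemma card_hub_nbrs (f : {ffun V -> 'I_4}) v (P : pred nat) :
  #|[set h | P (copy f v h)]| <= #|nbrs_with C f P (inl v)|.
Proof.
rewrite -(card_imset _ (inr_copy_inj (v := v))); apply/subset_leq_card/subsetP => x.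
by case/imsetP => h; rewrite !inE ffunE => Ph ->; rewrite /= eqxx.
Qed.

Definition copy_cost (k : nat) : nat :=
  match k with
  | 0 => #|TH| + gamma eH
  | 1 => gamma_oidR eH
  | 2 => gamma_oiR eH
  | _ => beta eH
  end.

Lemma corona_costE (fG : {ffun TG -> 'I_4}) :
  corona_cost eH fG = \sum_(v : TG) (fG v + copy_cost (fG v)).
Proof.
rewrite /corona_cost -!sum_nat_mem !big_distrl -!big_split /=.
apply: eq_bigr => v _; rewrite !inE.
by case: (fG v) => -[|[|[|[|//]]]] _ /=; rewrite !mul0n !mul1n !addn0 ?add0n addnC.
Qed.

Lemma DRD_at_copy (f : {ffun V -> 'I_4}) v h :
  DRD_at C f 0 (inr (v, h)) <-> DRD_at eH (copy f v) (hub f v) h.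
Proof. by rewrite /DRD_at !card_copy_nbrs !ffunE. Qed.

Lemma copy_cost_le_weight4 (f : {ffun V -> 'I_4}) v :
  isOIDRD C f -> copy_cost (hub f v) <= weight4 (copy f v).
Proof.
case/andP => /isDRDP f_DRD /independentP f_indep.
have zeros_nonadj x y : f x = 0 :> nat -> f y = 0 :> nat -> ~~ C x y.
  by move=> /eqP x0 /eqP y0; apply: f_indep; rewrite inE.
have copy_indep : independent eH [set h | copy f v h == 0 :> nat].
  apply/independentP => h k; rewrite !inE !ffunE => /eqP h0 /eqP k0.
  by have := zeros_nonadj _ _ h0 k0; rewrite /= eqxx.
have copy_neq0 h : hub f v = 0 :> nat -> copy f v h != 0 :> nat.
  rewrite !ffunE => v0; apply/eqP => h0.
  by have := zeros_nonadj _ _ v0 h0; rewrite /= eqxx.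
have copy_DRD h : DRD_at eH (copy f v) (hub f v) h by apply/DRD_at_copy.
case hub_v: (nat_of_ord (hub f v)) copy_DRD => [|[|[|k]]] copy_DRD /=.
- by apply: card_add_gamma_le_weight4 => [h|h /(proj2 (copy_DRD h))]; first exact: copy_neq0.
- by apply: bigmin_le; apply/andP; split => //; apply/isDRDP => h; exact: copy_DRD.
- apply: gamma_oiR_le_weight4 => // h /(proj1 (copy_DRD h)) /=.
  rewrite add0n add1n ltnS => -[] /leq_trans; apply; apply: nbrs_withS => n /eqP -> //.
- exact: beta_le_weight4.
Qed.

Lemma corona_cost_hub_le_weight4 (f : {ffun V -> 'I_4}) :
  isOIDRD C f -> corona_cost eH (hub f) <= weight4 f.
Proof.
move=> f_OIDRD; rewrite corona_costE weight4_corona.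
by apply: leq_sum => v _; rewrite leq_add2l; exact: copy_cost_le_weight4.
Qed.

Lemma independent_hub_zeros (f : {ffun V -> 'I_4}) :
  isOIDRD C f -> independent eG [set v | hub f v == 0 :> nat].
Proof.
case/andP => _ /independentP f_indep; apply/independentP => u w.
by rewrite !inE !ffunE => u0 w0; apply: (f_indep (inl u) (inl w)); rewrite inE.
Qed.

Section Labelling.
Variables (D : {set TH}) (hO : {ffun TH -> 'I_4}) (r : {ffun TH -> 'I_3}) (S : {set TH}).
Hypotheses (D_dom : dominating eH D) (D_big : 1 < #|D|).
Hypotheses (hO_OIDRD : isOIDRD eH hO) (hO_big : exists h, 1 < hO h).
Hypotheses (r_OIRD : isOIRD eH r) (S_cover : vertex_cover eH S).

Definition copy_label (k : nat) : {ffun TH -> 'I_4} :=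
  match k with
  | 0 => dom_label D
  | 1 => hO
  | 2 => widen_label r
  | _ => cover_label S
  end.

Definition corona_label (fG : {ffun TG -> 'I_4}) : {ffun V -> 'I_4} :=
  [ffun x => match x with inl v => fG v | inr (v, h) => copy_label (fG v) h end].

Lemma hub_corona_label (fG : {ffun TG -> 'I_4}) : hub (corona_label fG) = fG.
Proof. by apply/ffunP => v; rewrite !ffunE. Qed.

Lemma copy_corona_label (fG : {ffun TG -> 'I_4}) v :
  copy (corona_label fG) v = copy_label (fG v).
Proof. by apply/ffunP => h; rewrite !ffunE. Qed.

Lemma copy_label_DRD_at (k : 'I_4) h : DRD_at eH (copy_label k) k h.
Proof.
case: k => k /=; case: k => [|[|[|[|//]]]] _; rewrite /DRD_at /=.
- rewrite dom_labelE; split => // /eqP; rewrite eqSS eqb0 => hD.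
  have [|[w ehw wD]] := dominatingP _ _ D_dom h; first by rewrite (negbTE hD).
  by apply/card_gt0P; exists w; rewrite !inE ehw dom_labelE wD.
- by case/andP: hO_OIDRD => /isDRDP /(_ h).
- have nbrs_widen P : nbrs_with eH (widen_label r) P h = nbrs_with eH r P h.
    by apply/setP => w; rewrite !inE widen_labelE.
  rewrite widen_labelE !nbrs_widen; split=> // /(isRDP _ _ (andP r_OIRD).1).
  by rewrite add1n ltnS => ->; right.
- by split=> _; [left|]; rewrite add1n.
Qed.

Lemma copy_label_zeros (k : 'I_4) :
  independent eH [set h | copy_label k h == 0 :> nat].
Proof.
apply/independentP => h w; rewrite !inE.
case: k => k /=; case: k => [|[|[|[|//]]]] _ /=.
- by rewrite dom_labelE.
- by move=> h0 w0; move/independentP: (andP hO_OIDRD).2; apply; rewrite inE.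
- rewrite !widen_labelE => h0 w0.
  by move/independentP: (andP r_OIRD).2; apply; rewrite inE.
- rewrite !cover_labelE !eqb0 => hS wS; apply/negP => /(vertex_coverP _ _ S_cover h w).
  by rewrite (negbTE hS) (negbTE wS) => -[].
Qed.

Lemma corona_label_OIDRD (fG : {ffun TG -> 'I_4}) :
  independent eG [set v | fG v == 0 :> nat] -> isOIDRD C (corona_label fG).
Proof.
move=> fG_indep; apply/andP; split.
  apply/isDRDP => -[v|[v h]]; last first.
    apply/DRD_at_copy; rewrite hub_corona_label copy_corona_label.
    exact: (copy_label_DRD_at (fG v)).
  have hub_nbrs P := card_hub_nbrs (corona_label fG) v P.
  rewrite copy_corona_label in hub_nbrs; rewrite /DRD_at ffunE.
  case fG_v: (nat_of_ord (fG v)) hub_nbrs => [|[|k]] hub_nbrs; split => // _.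
    right; apply: leq_trans D_big (leq_trans _ (hub_nbrs (pred1 2))).
    by apply/subset_leq_card/subsetP => h hD; rewrite inE /= dom_labelE hD.
  apply: leq_trans (hub_nbrs (leq 2)); case: hO_big => h hO_h.
  by apply/card_gt0P; exists h; rewrite inE.
apply/independentP => x y; rewrite !inE.
case: x => [u|[u h]]; case: y => [w|[w k]]; rewrite !ffunE /=.
- by move=> u0 w0; move/independentP: fG_indep; apply; rewrite inE.
- by move=> u0; apply: contraTN => /eqP <-; rewrite (eqP u0) dom_labelE.
- by move=> h0 w0; apply: contraTN h0 => /eqP <-; rewrite (eqP w0) dom_labelE.
- move=> h0 k0; apply/negP => /andP [/eqP uw ehk]; move: h0 k0; rewrite uw => h0 k0.
  move/independentP: (copy_label_zeros (fG w)) => /(_ h k).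
  by rewrite !inE h0 k0 ehk => /(_ isT isT).
Qed.

Hypotheses (D_min : gamma eH = #|D|) (hO_min : gamma_oidR eH = weight4 hO).
Hypotheses (r_min : gamma_oiR eH = weight3 r) (S_min : beta eH = #|S|).

Lemma weight4_copy_label (k : 'I_4) : weight4 (copy_label k) = copy_cost k.
Proof.
case: k => k /=; case: k => [|[|[|[|//]]]] _ /=.
- by rewrite weight4_dom_label D_min.
- by rewrite hO_min.
- by rewrite weight4_widen_label r_min.
- by rewrite weight4_cover_label S_min.
Qed.

Lemma weight4_corona_label (fG : {ffun TG -> 'I_4}) :
  weight4 (corona_label fG) = corona_cost eH fG.
Proof.
rewrite weight4_corona corona_costE; apply: eq_bigr => v _.
by rewrite hub_corona_label copy_corona_label weight4_copy_label.
Qed.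

End Labelling.

End Corona.

Theorem theorem6 (TG TH : finType) (eG : rel TG) (eH : rel TH) :
  simple_graph eG -> simple_graph eH ->
  max_degree eH + 2 <= #|TH| ->
  (exists fG : {ffun TG -> 'I_4},
      independent eG [set v | fG v == 0 :> nat] /\
      gamma_oidR (corona eG eH) = corona_cost eH fG) /\
  (forall fG : {ffun TG -> 'I_4},
      independent eG [set v | fG v == 0 :> nat] ->
      gamma_oidR (corona eG eH) <= corona_cost eH fG).
Proof.
move=> _ [eH_sym _] deg_small.
have /card_gt0P [h0 _] : 0 < #|TH| by lia.
have [D D_dom D_min] := gamma_attained eH.
have [hO hO_OIDRD hO_min] := gamma_oidR_attained eH.
have [r r_OIRD r_min] := gamma_oiR_attained eH.
have [S S_cover S_min] := beta_attained eH.
have D_big := two_le_card_dominating eH_sym deg_small D_dom.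
have hO_big := isDRD_big_label h0 (andP hO_OIDRD).1.
have upper (fG : {ffun TG -> 'I_4}) : independent eG [set v | fG v == 0 :> nat] ->
    gamma_oidR (corona eG eH) <= corona_cost eH fG.
  move=> fG_indep; rewrite -(weight4_corona_label D_min hO_min r_min S_min).
  exact/bigmin_le/(corona_label_OIDRD D_dom D_big hO_OIDRD hO_big r_OIRD S_cover).
split=> //.
have [f f_OIDRD f_min] := gamma_oidR_attained (corona eG eH).
have hub_indep := independent_hub_zeros f_OIDRD.
exists (hub f); split=> //.
by apply/eqP; rewrite eqn_leq upper // f_min (corona_cost_hub_le_weight4 f_OIDRD).
Qed.
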